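(* For all closed terms $t_0,t_1$, if $t_0\approx_{\emptyset}t_1$ then $t_0\approx^p_{\emptyset}t_1$.
   Context: Terms of $\lambda_S$: $t ::= x \mid \lambda x.t \mid t\,t \mid \mathcal{S}k.t \mid \langle t\rangle$ (shift binds $k$; $\langle\cdot\rangle$ reset), up to $\alpha$-conversion. Values $v::=\lambda x.t$. Pure contexts $E ::= \Box \mid v\,E \mid E\,t$; evaluation contexts $F ::= \Box \mid v\,F \mid F\,t \mid \langle F\rangle$. Reduction: $F[(\lambda x.t)v]\to F[t\{v/x\}]$; $F[\langle E[\mathcal Sk.t]\rangle]\to F[\langle t\{\lambda x.\langle E[x]\rangle/k\}\rangle]$ ($x\notin\mathrm{fv}(E)$); $F[\langle v\rangle]\to F[v]$; $\to^*$ reflexive-transitive closure. Stuck: not a value and irreducible; normal form: value or stuck. Program: term $\langle t\rangle$ (ranged over by $p$). Closures: for $R$ a relation on closed terms, $\widetilde R$ is the smallest relation containing $R$, all $(x,x)$, closed under all term constructors, restricted to closed terms; $\widehat R$ is the smallest relation on closed evaluation contexts with $\Box\widehat R\Box$, $v_0F_0\widehat Rv_1F_1$ if $F_0\widehat RF_1,v_0\widetilde Rv_1$; $F_0t_0\widehat RF_1t_1$ if $F_0\widehat RF_1,t_0\widetilde Rt_1$; $\langle F_0\rangle\widehat R\langle F_1\rangle$ if $F_0\widehat RF_1$. An environmental relation $\mathcal X$ is a set of environments (relations on closed terms) and triples $(\mathcal E,t_0,t_1)$ with $t_0,t_1$ closed, written $t_0\mathcal X_{\mathcal E}t_1$. Relaxed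 bisimilarity $\approx$: environments relate closed values with values and closed stuck terms with stuck terms; $\mathcal X$ is an environmental bisimulation if (1) whenever $t_0\mathcal X_{\mathcal E}t_1$: (a) $t_0\to t_0'$ implies $t_1\to^*t_1'$, $t_0'\mathcal X_{\mathcal E}t_1'$; (b) $t_0=v_0$ implies $t_1\to^*v_1$, $\mathcal E\cup\{(v_0,v_1)\}\in\mathcal X$; (c) $t_0$ stuck implies $t_1\to^*t_1'$ stuck, $\mathcal E\cup\{(t_0,t_1')\}\in\mathcal X$; (d) symmetric conditions; (2) whenever $\mathcal E\in\mathcal X$: (a) $(\lambda x.t_0)\mathcal E(\lambda x.t_1)$, $v_0\widetilde{\mathcal E}v_1$ imply $t_0\{v_0/x\}\mathcal X_{\mathcal E}t_1\{v_1/x\}$; (b) $E_0[\mathcal Sk.t_0]\mathcal EE_1[\mathcal Sk.t_1]$, pure $E_0'\widehat{\mathcal E}E_1'$ imply $\langle t_0\{\lambda x.\langle E_0'[E_0[x]]\rangle/k\}\rangle\mathcal X_{\mathcal E}\langle t_1\{\lambda x.\langle E_1'[E_1[x]]\rangle/k\}\rangle$ ($x$ fresh). $\approx$ is the largest; $t_0\approx_\emptyset t_1$ means $(\emptyset,t_0,t_1)\in\approx$. Program bisimilarity $\approx^p$: environments relate closed values only; $\mathcal X$ is an environmental bisimulation for programs if (1) if $t_0\mathcal X_{\mathcal E}t_1$ and $t_0,t_1$ are not both programs then for all pure $E_0\widehat{\mathcal E}E_1$, $\langle E_0[t_0]\rangle\mathcal X_{\mathcal E}\langle E_1[t_1]\rangle$;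 (2) if $p_0\mathcal X_{\mathcal E}p_1$: (a) $p_0\to p_0'$ (program) implies $p_1\to^*p_1'$ (program), $p_0'\mathcal X_{\mathcal E}p_1'$; (b) $p_0\to v_0$ implies $p_1\to^*v_1$, $\{(v_0,v_1)\}\cup\mathcal E\in\mathcal X$; (c) symmetric conditions; (3) for $\mathcal E\in\mathcal X$, $(\lambda x.t_0)\mathcal E(\lambda x.t_1)$, $v_0\widetilde{\mathcal E}v_1$ imply $t_0\{v_0/x\}\mathcal X_{\mathcal E}t_1\{v_1/x\}$. $\approx^p$ is the largest; $t_0\approx^p_\emptyset t_1$ means $(\emptyset,t_0,t_1)\in\approx^p$. *)

From Stdlib Require Import Arith.

(* Terms up to alpha-conversion: de Bruijn indices.
   [Lam b] binds index 0 in b; [Shift b] binds the continuation k as index 0 in b. *)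
Inductive term : Type :=
| Var : nat -> term
| Lam : term -> term
| App : term -> term -> term
| Shift : term -> term
| Reset : term -> term.

Fixpoint lift (c : nat) (t : term) : term :=
  match t with
  | Var n => if Nat.ltb n c then Var n else Var (S n)
  | Lam b => Lam (lift (S c) b)
  | App t1 t2 => App (lift c t1) (lift c t2)
  | Shift b => Shift (lift (S c) b)
  | Reset b => Reset (lift c b)
  end.

(* subst k u t : capture-avoiding substitution of u for index k in t
   (removing the binder: indices above k are decremented). *)
Fixpoint subst (k : nat) (u : term) (t : term) : term :=
  match t with
  | Var n => if Nat.eqb n k then u
             else if Nat.ltb k n then Var (pred n) else Var n
  | Lam b => Lam (subst (S k) (lift 0 u) b)
  | App t1 t2 => App (subst k u t1) (subst k u t2)
  | Shift b => Shift (subst (S k) (lift 0 u) b)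
  | Reset b => Reset (subst k u b)
  end.

(* t{v/x} where t is the body of the binder *)
Definition inst (b v : term) : term := subst 0 v b.

Fixpoint closed_at (n : nat) (t : term) : Prop :=
  match t with
  | Var m => m < n
  | Lam b => closed_at (S n) b
  | App t1 t2 => closed_at n t1 /\ closed_at n t2
  | Shift b => closed_at (S n) b
  | Reset b => closed_at n b
  end.

Definition closed (t : term) : Prop := closed_at 0 t.

Definition is_value (t : term) : Prop := exists b, t = Lam b.

Definition is_program (t : term) : Prop := exists b, t = Reset b.

(* Evaluation contexts F ::= [] | v F | F t | <F>.
   [CAppR b F] stands for (Lam b) F (value on the left).
   Pure contexts E are those without [CReset]. *)
Inductive ctx : Type :=
| Hole : ctx
| CAppR : term -> ctx -> ctx
| CAppL : ctx -> term -> ctx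
| CReset : ctx -> ctx.

Fixpoint plug (F : ctx) (t : term) : term :=
  match F with
  | Hole => t
  | CAppR b F' => App (Lam b) (plug F' t)
  | CAppL F' u => App (plug F' t) u
  | CReset F' => Reset (plug F' t)
  end.

Fixpoint pure (F : ctx) : Prop :=
  match F with
  | Hole => True
  | CAppR _ F' => pure F'
  | CAppL F' _ => pure F'
  | CReset _ => False
  end.

Fixpoint lift_ctx (c : nat) (F : ctx) : ctx :=
  match F with
  | Hole => Hole
  | CAppR b F' => CAppR (lift (S c) b) (lift_ctx c F')
  | CAppL F' u => CAppL (lift_ctx c F') (lift c u)
  | CReset F' => CReset (lift_ctx c F')
  end.

(* The captured continuation  lambda x. < E[x] >  (x fresh for E). *)
Definition cont (E : ctx) : term := Lam (Reset (plug (lift_ctx 0 E) (Var 0))).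

(* lambda x. < E'[E[x]] > (x fresh) *)
Definition cont2 (E' E : ctx) : term :=
  Lam (Reset (plug (lift_ctx 0 E') (plug (lift_ctx 0 E) (Var 0)))).

Inductive step : term -> term -> Prop :=
| step_beta : forall F b v, is_value v ->
    step (plug F (App (Lam b) v)) (plug F (inst b v))
| step_shift : forall F E b, pure E ->
    step (plug F (Reset (plug E (Shift b)))) (plug F (Reset (inst b (cont E))))
| step_reset : forall F v, is_value v ->
    step (plug F (Reset v)) (plug F v).

Inductive steps : term -> term -> Prop :=
| steps_refl : forall t, steps t t
| steps_cons : forall t t' t'', step t t' -> steps t' t'' -> steps t t''.

Definition stuck (t : term) : Prop := ~ is_value t /\ forall t', ~ step t t'.

Definition rel := term -> term -> Prop.

Definition empty_env : rel := fun _ _ => False.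

Definition env_add (E : rel) (a b : term) : rel :=
  fun x y => E x y \/ (x = a /\ y = b).

Inductive ctx_clos (R : rel) : rel :=
| cc_rel : forall a b, R a b -> ctx_clos R a b
| cc_var : forall n, ctx_clos R (Var n) (Var n)
| cc_lam : forall a b, ctx_clos R a b -> ctx_clos R (Lam a) (Lam b)
| cc_app : forall a a' b b', ctx_clos R a b -> ctx_clos R a' b' ->
    ctx_clos R (App a a') (App b b')
| cc_shift : forall a b, ctx_clos R a b -> ctx_clos R (Shift a) (Shift b)
| cc_reset : forall a b, ctx_clos R a b -> ctx_clos R (Reset a) (Reset b).

Definition tilde (R : rel) : rel :=
  fun a b => ctx_clos R a b /\ closed a /\ closed b.

Inductive hat (R : rel) : ctx -> ctx -> Prop :=
| hat_hole : hat R Hole Hole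
| hat_appR : forall b0 b1 F0 F1, hat R F0 F1 -> tilde R (Lam b0) (Lam b1) ->
    hat R (CAppR b0 F0) (CAppR b1 F1)
| hat_appL : forall F0 F1 u0 u1, hat R F0 F1 -> tilde R u0 u1 ->
    hat R (CAppL F0 u0) (CAppL F1 u1)
| hat_reset : forall F0 F1, hat R F0 F1 -> hat R (CReset F0) (CReset F1).

Record envrel : Type := {
  envs : rel -> Prop;
  trip : rel -> term -> term -> Prop
}.

Definition relaxed_env (E : rel) : Prop :=
  forall a b, E a b -> closed a /\ closed b /\
    ((is_value a /\ is_value b) \/ (stuck a /\ stuck b)).

Definition relaxed_envrel (X : envrel) : Prop :=
  (forall E, envs X E -> relaxed_env E) /\
  (forall E t0 t1, trip X E t0 t1 -> relaxed_env E /\ closed t0 /\ closed t1).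

Definition relaxed_bisim (X : envrel) : Prop :=
  relaxed_envrel X /\
  (* (1) *)
  (forall E t0 t1, trip X E t0 t1 ->
     (* (a) *)
     (forall t0', step t0 t0' -> exists t1', steps t1 t1' /\ trip X E t0' t1') /\
     (* (b) *)
     (is_value t0 -> exists v1, is_value v1 /\ steps t1 v1 /\ envs X (env_add E t0 v1)) /\
     (* (c) *)
     (stuck t0 -> exists t1', stuck t1' /\ steps t1 t1' /\ envs X (env_add E t0 t1')) /\
     (* (d) symmetric conditions *)
     (forall t1', step t1 t1' -> exists t0', steps t0 t0' /\ trip X E t0' t1') /\
     (is_value t1 -> exists v0, is_value v0 /\ steps t0 v0 /\ envs X (env_add E v0 t1)) /\
     (stuck t1 -> exists t0', stuck t0' /\ steps t0 t0' /\ envs X (env_add E t0' t1))) /\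
  (* (2) *)
  (forall E, envs X E ->
     (* (a) *)
     (forall b0 b1 v0 v1, E (Lam b0) (Lam b1) -> is_value v0 -> is_value v1 ->
        tilde E v0 v1 -> trip X E (inst b0 v0) (inst b1 v1)) /\
     (* (b) *)
     (forall E0 E1 s0 s1, pure E0 -> pure E1 ->
        E (plug E0 (Shift s0)) (plug E1 (Shift s1)) ->
        forall E0' E1', pure E0' -> pure E1' -> hat E E0' E1' ->
        trip X E (Reset (inst s0 (cont2 E0' E0))) (Reset (inst s1 (cont2 E1' E1))))).

(* t0 ≈_E t1 : (E,t0,t1) belongs to the largest relaxed bisimulation *)
Definition relaxed_bisimilar (E : rel) (t0 t1 : term) : Prop :=
  exists X, relaxed_bisim X /\ trip X E t0 t1.

Definition prog_env (E : rel) : Prop :=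
  forall a b, E a b -> closed a /\ closed b /\ is_value a /\ is_value b.

Definition prog_envrel (X : envrel) : Prop :=
  (forall E, envs X E -> prog_env E) /\
  (forall E t0 t1, trip X E t0 t1 -> prog_env E /\ closed t0 /\ closed t1).

Definition prog_bisim (X : envrel) : Prop :=
  prog_envrel X /\
  (forall E t0 t1, trip X E t0 t1 -> ~ (is_program t0 /\ is_program t1) ->
     forall E0 E1, pure E0 -> pure E1 -> hat E E0 E1 ->
     trip X E (Reset (plug E0 t0)) (Reset (plug E1 t1))) /\
  (forall E p0 p1, is_program p0 -> is_program p1 -> trip X E p0 p1 ->
     (forall p0', is_program p0' -> step p0 p0' ->
        exists p1', is_program p1' /\ steps p1 p1' /\ trip X E p0' p1') /\
     (forall v0, is_value v0 -> step p0 v0 ->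
        exists v1, is_value v1 /\ steps p1 v1 /\ envs X (env_add E v0 v1)) /\
     (forall p1', is_program p1' -> step p1 p1' ->
        exists p0', is_program p0' /\ steps p0 p0' /\ trip X E p0' p1') /\
     (forall v1, is_value v1 -> step p1 v1 ->
        exists v0, is_value v0 /\ steps p0 v0 /\ envs X (env_add E v0 v1))) /\
  (forall E, envs X E ->
     forall b0 b1 v0 v1, E (Lam b0) (Lam b1) -> is_value v0 -> is_value v1 ->
       tilde E v0 v1 -> trip X E (inst b0 v0) (inst b1 v1)).

Definition program_bisimilar (E : rel) (t0 t1 : term) : Prop :=
  exists X, prog_bisim X /\ trip X E t0 t1.

From Stdlib Require Import Arith Lia Classical FunctionalExtensionality PropExtensionality.

(* Given a relaxed bisimulation X, relate s0 and s1 when they reduce to G0[t0] and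
   G1[t1] with (E, t0, t1) in X and G0, G1 related by the compatible closure of E, or
   to terms related by the compatible closure of an environment E of X; the
   environments of the program relation are the pairs of values of such closures.
   A step of G0[t0] is either a step of t0, answered by X, or happens once t0 is a
   value or stuck, at which point X adds (t0, t1') to its environment and the pair
   falls into the closure case.  In the closure case the other side performs the
   same step; the only non-structural situation is a shift captured across a stuck
   leaf of the environment, which is exactly clause (2b) of relaxed bisimulations.
   Reduction being deterministic, the left program may step alone; the right side
   follows by symmetry. *)

Fixpoint ctx_comp (G F : ctx) : ctx :=
  match G with
  | Hole => F
  | CAppR b G' => CAppR b (ctx_comp G' F)
  | CAppL G' u => CAppL (ctx_comp G' F) u
  | CReset G' => CReset (ctx_comp G' F)
  end.

Lemma plug_comp G F t : plug (ctx_comp G F) t = plug G (plug F t).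
Proof. induction G; simpl; congruence. Qed.

Lemma pure_comp G F : pure G -> pure F -> pure (ctx_comp G F).
Proof. induction G; simpl; tauto. Qed.

Lemma lift_ctx_comp c G F :
  lift_ctx c (ctx_comp G F) = ctx_comp (lift_ctx c G) (lift_ctx c F).
Proof. induction G; simpl; congruence. Qed.

Lemma cont_comp E' E : cont (ctx_comp E' E) = cont2 E' E.
Proof. unfold cont, cont2. now rewrite lift_ctx_comp, plug_comp. Qed.

Lemma plug_eq_lam F t b : plug F t = Lam b -> F = Hole /\ t = Lam b.
Proof. destruct F; simpl; intros H; try discriminate; auto. Qed.

Lemma plug_shift_neq_lam E b c : plug E (Shift b) <> Lam c.
Proof. intros H. apply plug_eq_lam in H as [_ H]. discriminate. Qed.

Lemma plug_shift_not_value E b : ~ is_value (plug E (Shift b)).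
Proof. intros [c H]. exact (plug_shift_neq_lam E b c H). Qed.

Lemma plug_shift_inj E1 E2 b1 b2 : pure E1 -> pure E2 ->
  plug E1 (Shift b1) = plug E2 (Shift b2) -> E1 = E2 /\ b1 = b2.
Proof.
  revert E2; induction E1 as [|c E1 IH|E1 IH u|E1 IH];
    intros [|c' E2|E2 u'|E2] H1 H2 H; simpl in *;
    try discriminate; try contradiction; injection H; intros.
  - auto.
  - destruct (IH E2) as [-> ->]; subst; auto.
  - exfalso; eapply plug_shift_neq_lam; eauto.
  - exfalso; eapply plug_shift_neq_lam; eauto.
  - destruct (IH E2) as [-> ->]; subst; auto.
Qed.

(** * Reduction is deterministic *)

Inductive contr : term -> term -> Prop :=
| contr_beta b v : is_value v -> contr (App (Lam b) v) (inst b v)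
| contr_shift E b : pure E -> contr (Reset (plug E (Shift b))) (Reset (inst b (cont E)))
| contr_reset v : is_value v -> contr (Reset v) v.

Definition redex (r : term) : Prop := exists r', contr r r'.

Lemma step_plug_contr F r r' : contr r r' -> step (plug F r) (plug F r').
Proof. intros []; constructor; auto. Qed.

Lemma step_contr_inv t t' : step t t' ->
  exists F r r', contr r r' /\ t = plug F r /\ t' = plug F r'.
Proof.
  intros [F b v Hv|F E b HE|F v Hv]; exists F; do 2 eexists;
    (split; [|split; reflexivity]); constructor; auto.
Qed.

Lemma step_plug G t t' : step t t' -> step (plug G t) (plug G t').
Proof.
  intros H. apply step_contr_inv in H as (F & r & r' & Hr & -> & ->).
  rewrite <- !plug_comp. now apply step_plug_contr.
Qed.

Lemma contr_app_inv a u r' : contr (App a u) r' -> is_value a /\ is_value u.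
Proof. inversion 1; subst; split; [eexists|]; eauto. Qed.

Lemma contr_reset_inv a r' : contr (Reset a) r' ->
  is_value a \/ exists E b, pure E /\ a = plug E (Shift b).
Proof. inversion 1; subst; eauto. Qed.

Lemma plug_redex_neq_lam F r b : redex r -> plug F r <> Lam b.
Proof. intros [r' Hr] H. apply plug_eq_lam in H as [_ ->]. inversion Hr. Qed.

Lemma plug_redex_not_value F r : redex r -> ~ is_value (plug F r).
Proof. intros Hr [b H]. exact (plug_redex_neq_lam F r b Hr H). Qed.

Lemma plug_shift_neq_plug_redex E b F r :
  pure E -> redex r -> plug E (Shift b) <> plug F r.
Proof.
  intros HE Hr; revert F; induction E as [|c E IH|E IH u|E IH];
    intros [|c' F|F u'|F] H; simpl in *; try discriminate; try contradiction.
  - subst r. destruct Hr as [r' Hr]. inversion Hr.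
  - subst r. destruct Hr as [r' Hr]. apply contr_app_inv in Hr as [_ Hv].
    exact (plug_shift_not_value E b Hv).
  - injection H as _ H. exact (IH HE F H).
  - injection H as H _. exact (plug_redex_neq_lam F r c Hr (eq_sym H)).
  - subst r. destruct Hr as [r' Hr]. apply contr_app_inv in Hr as [Hv _].
    exact (plug_shift_not_value E b Hv).
  - injection H as H _. exact (plug_shift_neq_lam E b c' H).
  - injection H as H _. exact (IH HE F H).
Qed.

Lemma redex_plug_redex F r1 r2 : redex r1 -> redex r2 -> r1 = plug F r2 -> F = Hole.
Proof.
  intros [r1' H1] H2 Heq. destruct F as [|c F|F u|F]; simpl in Heq; subst r1; auto; exfalso.
  - apply contr_app_inv in H1 as [_ Hv]. exact (plug_redex_not_value F r2 H2 Hv).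
  - apply contr_app_inv in H1 as [Hv _]. exact (plug_redex_not_value F r2 H2 Hv).
  - apply contr_reset_inv in H1 as [Hv | (E & b & HE & Heq)].
    + exact (plug_redex_not_value F r2 H2 Hv).
    + exact (plug_shift_neq_plug_redex E b F r2 HE H2 (eq_sym Heq)).
Qed.

Lemma plug_redex_inj F1 F2 r1 r2 :
  redex r1 -> redex r2 -> plug F1 r1 = plug F2 r2 -> F1 = F2 /\ r1 = r2.
Proof.
  intros H1 H2. revert F2.
  induction F1 as [|c F1 IH|F1 IH u|F1 IH]; intros F2 Heq; simpl in Heq.
  - pose proof (redex_plug_redex F2 r1 r2 H1 H2 Heq); subst F2. auto.
  - destruct F2 as [|c' F2|F2 u'|F2]; simpl in Heq; try discriminate.
    + discriminate (redex_plug_redex (CAppR c F1) r2 r1 H2 H1 (eq_sym Heq)).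
    + injection Heq as -> Heq. destruct (IH F2 Heq) as [-> ->]. auto.
    + injection Heq as Heq _. destruct (plug_redex_neq_lam F2 r2 c H2 (eq_sym Heq)).
  - destruct F2 as [|c' F2|F2 u'|F2]; simpl in Heq; try discriminate.
    + discriminate (redex_plug_redex (CAppL F1 u) r2 r1 H2 H1 (eq_sym Heq)).
    + injection Heq as Heq _. destruct (plug_redex_neq_lam F1 r1 c' H1 Heq).
    + injection Heq as Heq ->. destruct (IH F2 Heq) as [-> ->]. auto.
  - destruct F2 as [|c' F2|F2 u'|F2]; simpl in Heq; try discriminate.
    + discriminate (redex_plug_redex (CReset F1) r2 r1 H2 H1 (eq_sym Heq)).
    + injection Heq as Heq. destruct (IH F2 Heq) as [-> ->]. auto.
Qed.

Lemma contr_det r r1 r2 : contr r r1 -> contr r r2 -> r1 = r2.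
Proof.
  intros H1 H2; destruct H1; inversion H2; subst; auto.
  - match goal with H : plug _ _ = plug _ _ |- _ =>
      apply plug_shift_inj in H as [-> ->]; auto end.
  - exfalso. eapply plug_shift_not_value; eauto.
  - exfalso. eapply plug_shift_not_value; eauto.
Qed.

Lemma step_det t t1 t2 : step t t1 -> step t t2 -> t1 = t2.
Proof.
  intros H1 H2.
  apply step_contr_inv in H1 as (F1 & r1 & r1' & C1 & -> & ->).
  apply step_contr_inv in H2 as (F2 & r2 & r2' & C2 & Heq & ->).
  destruct (plug_redex_inj F1 F2 r1 r2) as [-> ->]; [exists r1'; auto | exists r2'; auto | exact Heq |].
  now rewrite (contr_det _ _ _ C1 C2).
Qed.

Lemma value_irreducible v t : is_value v -> ~ step v t.
Proof.
  intros [b ->] H. apply step_contr_inv in H as (F & r & r' & Hr & Heq & _).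
  exact (plug_redex_neq_lam F r b (ex_intro _ r' Hr) (eq_sym Heq)).
Qed.

Lemma steps_trans a b c : steps a b -> steps b c -> steps a c.
Proof. induction 1; eauto using steps_cons. Qed.

Lemma step_steps a b : step a b -> steps a b.
Proof. eauto using steps_cons, steps_refl. Qed.

Lemma steps_plug G t t' : steps t t' -> steps (plug G t) (plug G t').
Proof. induction 1; eauto using steps_refl, steps_cons, step_plug. Qed.

Lemma steps_value v w : is_value v -> steps v w -> w = v.
Proof.
  intros Hv H; inversion H as [|? ? ? Hs]; subst; auto.
  destruct (value_irreducible _ _ Hv Hs).
Qed.

Lemma steps_step_det t a t' : steps t a -> step t t' -> t = a \/ steps t' a.
Proof.
  intros Ha H; inversion Ha as [|? t'' ? H1 H2]; subst; auto.
  right. now rewrite (step_det _ _ _ H H1).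
Qed.

(** * Closed terms *)

Lemma closed_at_lift t n c : closed_at n t -> closed_at (S n) (lift c t).
Proof.
  revert n c; induction t as [m|t IH|t1 IH1 t2 IH2|t IH|t IH]; intros n c; simpl; auto.
  - destruct (Nat.ltb m c); simpl; lia.
  - intros []; auto.
Qed.

Lemma closed_at_subst t n k u :
  closed_at (S n) t -> k <= n -> closed_at n u -> closed_at n (subst k u t).
Proof.
  revert n k u; induction t as [m|t IH|t1 IH1 t2 IH2|t IH|t IH]; intros n k u; simpl.
  - intros Hm Hk Hu. destruct (Nat.eqb_spec m k); auto.
    destruct (Nat.ltb_spec k m); simpl; lia.
  - intros Ht Hk Hu. apply IH; auto using closed_at_lift; lia.
  - intros [] Hk Hu; auto.
  - intros Ht Hk Hu. apply IH; auto using closed_at_lift; lia.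
  - auto.
Qed.

Lemma lift_closed_at t n c : closed_at n t -> n <= c -> lift c t = t.
Proof.
  revert n c; induction t as [m|t IH|t1 IH1 t2 IH2|t IH|t IH]; intros n c; simpl.
  - intros Hm Hc. destruct (Nat.ltb_spec m c); auto. lia.
  - intros Ht Hc. rewrite (IH (S n)); auto. lia.
  - intros [] Hc. now rewrite (IH1 n), (IH2 n).
  - intros Ht Hc. rewrite (IH (S n)); auto. lia.
  - intros Ht Hc. now rewrite (IH n).
Qed.

Lemma subst_closed_at t n k u : closed_at n t -> n <= k -> subst k u t = t.
Proof.
  revert n k u; induction t as [m|t IH|t1 IH1 t2 IH2|t IH|t IH]; intros n k u; simpl.
  - intros Hm Hk. destruct (Nat.eqb_spec m k); [lia|].
    destruct (Nat.ltb_spec k m); auto. lia.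
  - intros Ht Hk. rewrite (IH (S n)); auto. lia.
  - intros [] Hk. now rewrite (IH1 n), (IH2 n).
  - intros Ht Hk. rewrite (IH (S n)); auto. lia.
  - intros Ht Hk. now rewrite (IH n).
Qed.

Fixpoint ctx_closed_at (n : nat) (F : ctx) : Prop :=
  match F with
  | Hole => True
  | CAppR b F' => closed_at (S n) b /\ ctx_closed_at n F'
  | CAppL F' u => ctx_closed_at n F' /\ closed_at n u
  | CReset F' => ctx_closed_at n F'
  end.

Lemma closed_at_plug F n t :
  closed_at n (plug F t) <-> ctx_closed_at n F /\ closed_at n t.
Proof. induction F; simpl; try rewrite IHF; tauto. Qed.

Lemma ctx_closed_at_comp G F n :
  ctx_closed_at n (ctx_comp G F) <-> ctx_closed_at n G /\ ctx_closed_at n F.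
Proof. induction G; simpl; try rewrite IHG; tauto. Qed.

Lemma ctx_closed_at_lift F n c : ctx_closed_at n F -> ctx_closed_at (S n) (lift_ctx c F).
Proof. induction F; simpl; intuition auto using closed_at_lift. Qed.

Lemma closed_cont E : ctx_closed_at 0 E -> closed (cont E).
Proof.
  intros H. unfold closed, cont; simpl. apply closed_at_plug.
  split; [now apply ctx_closed_at_lift | simpl; lia].
Qed.

Lemma closed_inst b v : closed_at 1 b -> closed v -> closed (inst b v).
Proof. intros. now apply closed_at_subst. Qed.

Lemma closed_contr r r' : contr r r' -> closed r -> closed r'.
Proof.
  unfold closed; intros [b v _|E b HE|v _]; simpl.
  - intros [Hb Hv]. now apply closed_inst.
  - intros Hr. apply closed_at_plug in Hr as [HE0 Hb].
    apply closed_inst; auto. now apply closed_cont.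
  - auto.
Qed.

Lemma closed_step t t' : step t t' -> closed t -> closed t'.
Proof.
  intros H. apply step_contr_inv in H as (F & r & r' & Hr & -> & ->).
  unfold closed; rewrite !closed_at_plug.
  intros [HF Hc]. split; auto. now apply (closed_contr r r').
Qed.

Lemma closed_steps t t' : steps t t' -> closed t -> closed t'.
Proof. induction 1; eauto using closed_step. Qed.

(** * Stuck terms *)

Lemma irreducible_plug G t : (forall u, ~ step (plug G t) u) -> forall u, ~ step t u.
Proof. intros H u Hs. exact (H _ (step_plug G _ _ Hs)). Qed.

Lemma closed_stuck_inv t : closed t -> stuck t ->
  exists E c, pure E /\ t = plug E (Shift c).
Proof.
  unfold closed; induction t as [m|b _|t1 IH1 t2 IH2|c _|t IH]; simpl;
    intros Hc [Hv Hs].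
  - lia.
  - destruct Hv; eexists; eauto.
  - destruct Hc as [Hc1 Hc2].
    pose proof (irreducible_plug (CAppL Hole t2) t1 Hs) as Hs1.
    destruct (classic (is_value t1)) as [[b ->]|Hv1].
    + pose proof (irreducible_plug (CAppR b Hole) t2 Hs) as Hs2.
      destruct (classic (is_value t2)) as [Hv2|Hv2].
      { destruct (Hs (inst b t2)). exact (step_plug_contr Hole _ _ (contr_beta b t2 Hv2)). }
      destruct (IH2 Hc2 (conj Hv2 Hs2)) as (E & c & HE & ->).
      now exists (CAppR b E), c.
    + destruct (IH1 Hc1 (conj Hv1 Hs1)) as (E & c & HE & ->).
      now exists (CAppL E t2), c.
  - now exists Hole, c.
  - exfalso. pose proof (irreducible_plug (CReset Hole) t Hs) as Hs'.
    destruct (classic (is_value t)) as [Hv'|Hv'].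
    + apply (Hs t). exact (step_plug_contr Hole _ _ (contr_reset t Hv')).
    + destruct (IH Hc (conj Hv' Hs')) as (E & c & HE & ->).
      apply (Hs (Reset (inst c (cont E)))).
      exact (step_plug_contr Hole _ _ (contr_shift E c HE)).
Qed.

Lemma reset_not_stuck a : closed (Reset a) -> ~ stuck (Reset a).
Proof.
  intros Hc Hs. destruct (closed_stuck_inv _ Hc Hs) as ([] & c & HE & Heq);
    simpl in *; try discriminate; contradiction.
Qed.

(** * The compatible closure of a relation *)

Definition closed_rel (R : rel) : Prop := forall a b, R a b -> closed a /\ closed b.

Definition rel_incl (R R' : rel) : Prop := forall a b, R a b -> R' a b.

Section CompatibleClosure.

Variable R : rel.
Hypothesis R_closed : closed_rel R.

Lemma ctx_clos_lift a b c : ctx_clos R a b -> ctx_clos R (lift c a) (lift c b).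
Proof.
  intros H; revert c; induction H; intros c; simpl;
    auto using cc_lam, cc_app, cc_shift, cc_reset.
  - destruct (R_closed a b H).
    rewrite (lift_closed_at a 0), (lift_closed_at b 0); auto using cc_rel; lia.
  - destruct (Nat.ltb n c); apply cc_var.
Qed.

Lemma ctx_clos_subst a b k u u' :
  ctx_clos R a b -> ctx_clos R u u' -> ctx_clos R (subst k u a) (subst k u' b).
Proof.
  intros H; revert k u u'; induction H; intros k u u' Hu; simpl;
    auto using cc_lam, cc_app, cc_shift, cc_reset, ctx_clos_lift.
  - destruct (R_closed a b H).
    rewrite (subst_closed_at a 0), (subst_closed_at b 0); auto using cc_rel; lia.
  - destruct (Nat.eqb n k); auto. destruct (Nat.ltb k n); apply cc_var.
Qed.

Lemma ctx_clos_inst b b' v v' :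
  ctx_clos R b b' -> ctx_clos R v v' -> ctx_clos R (inst b v) (inst b' v').
Proof. apply ctx_clos_subst. Qed.

End CompatibleClosure.

(* [hat] without its closedness side conditions. *)
Inductive ectx_clos (R : rel) : ctx -> ctx -> Prop :=
| ectx_hole : ectx_clos R Hole Hole
| ectx_appR b0 b1 F0 F1 : ectx_clos R F0 F1 -> ctx_clos R (Lam b0) (Lam b1) ->
    ectx_clos R (CAppR b0 F0) (CAppR b1 F1)
| ectx_appL F0 F1 u0 u1 : ectx_clos R F0 F1 -> ctx_clos R u0 u1 ->
    ectx_clos R (CAppL F0 u0) (CAppL F1 u1)
| ectx_reset F0 F1 : ectx_clos R F0 F1 -> ectx_clos R (CReset F0) (CReset F1).

Lemma ctx_clos_plug R G0 G1 t0 t1 :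
  ectx_clos R G0 G1 -> ctx_clos R t0 t1 -> ctx_clos R (plug G0 t0) (plug G1 t1).
Proof. induction 1; simpl; auto using cc_app, cc_reset. Qed.

Lemma ectx_clos_comp R G0 G1 F0 F1 :
  ectx_clos R G0 G1 -> ectx_clos R F0 F1 -> ectx_clos R (ctx_comp G0 F0) (ctx_comp G1 F1).
Proof. intros HG HF; induction HG; simpl; try constructor; auto. Qed.

Lemma ectx_clos_lift R G0 G1 c : closed_rel R ->
  ectx_clos R G0 G1 -> ectx_clos R (lift_ctx c G0) (lift_ctx c G1).
Proof.
  intros HR; induction 1; simpl; constructor; auto.
  - exact (ctx_clos_lift R HR _ _ c H0).
  - now apply ctx_clos_lift.
Qed.

Lemma ctx_clos_cont R G0 G1 : closed_rel R ->
  ectx_clos R G0 G1 -> ctx_clos R (cont G0) (cont G1).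
Proof.
  intros HR HG. apply cc_lam, cc_reset, ctx_clos_plug; [|apply cc_var].
  now apply ectx_clos_lift.
Qed.

Lemma ctx_clos_mono (R R' : rel) a b :
  (forall x y, R x y -> ctx_clos R' x y) -> ctx_clos R a b -> ctx_clos R' a b.
Proof. intros HR; induction 1; auto using cc_var, cc_lam, cc_app, cc_shift, cc_reset. Qed.

Lemma ctx_clos_incl R R' a b : rel_incl R R' -> ctx_clos R a b -> ctx_clos R' a b.
Proof. intros Hi. apply ctx_clos_mono. auto using cc_rel. Qed.

Lemma tilde_mono (R R' : rel) a b :
  (forall x y, R x y -> ctx_clos R' x y) -> tilde R a b -> tilde R' a b.
Proof. intros HR (H & Ha & Hb). repeat split; auto. eapply ctx_clos_mono; eauto. Qed.

Lemma ectx_clos_incl R R' G0 G1 : rel_incl R R' -> ectx_clos R G0 G1 -> ectx_clos R' G0 G1.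
Proof. intros Hi; induction 1; constructor; eauto using ctx_clos_incl. Qed.

Lemma hat_mono (R R' : rel) G0 G1 :
  (forall x y, R x y -> ctx_clos R' x y) -> hat R G0 G1 -> hat R' G0 G1.
Proof. intros HR; induction 1; constructor; eauto using tilde_mono. Qed.

Lemma ectx_clos_of_hat R G0 G1 : hat R G0 G1 -> ectx_clos R G0 G1.
Proof. induction 1 as [| ? ? ? ? ? ? [? _] | ? ? ? ? ? ? [? _] |]; constructor; auto. Qed.

Lemma hat_ctx_closed R G0 G1 : hat R G0 G1 -> ctx_closed_at 0 G0 /\ ctx_closed_at 0 G1.
Proof.
  induction 1 as [| ? ? ? ? ? IH [_ [H0 H1]] | ? ? ? ? ? IH [_ [H0 H1]] |];
    unfold closed in *; simpl in *; tauto.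
Qed.

Lemma hat_of_ectx_clos R G0 G1 : ectx_clos R G0 G1 ->
  ctx_closed_at 0 G0 -> ctx_closed_at 0 G1 -> hat R G0 G1.
Proof.
  induction 1; simpl; intros; constructor; unfold tilde, closed; simpl; tauto.
Qed.

Definition rel_flip (R : rel) : rel := fun a b => R b a.

Lemma rel_flip_env_add R a b : rel_flip (env_add R a b) = env_add (rel_flip R) b a.
Proof.
  extensionality x; extensionality y. apply propositional_extensionality.
  unfold rel_flip, env_add. tauto.
Qed.

Lemma ctx_clos_flip R a b : ctx_clos R a b -> ctx_clos (rel_flip R) b a.
Proof. induction 1; auto using cc_var, cc_lam, cc_app, cc_shift, cc_reset, cc_rel. Qed.

Lemma ectx_clos_flip R G0 G1 : ectx_clos R G0 G1 -> ectx_clos (rel_flip R) G1 G0.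
Proof. induction 1; constructor; auto using ctx_clos_flip. Qed.

Lemma tilde_flip R a b : tilde R a b -> tilde (rel_flip R) b a.
Proof. intros (H & Ha & Hb). repeat split; auto using ctx_clos_flip. Qed.

Lemma hat_flip R G0 G1 : hat R G0 G1 -> hat (rel_flip R) G1 G0.
Proof. induction 1; constructor; auto using tilde_flip. Qed.

(** * Relaxed environments *)

Lemma ctx_clos_lam_inv R b x :
  ctx_clos R (Lam b) x -> R (Lam b) x \/ exists b1, x = Lam b1 /\ ctx_clos R b b1.
Proof. inversion 1; subst; eauto. Qed.

Lemma ctx_clos_app_inv R a u x : ctx_clos R (App a u) x ->
  R (App a u) x \/ exists a1 u1, x = App a1 u1 /\ ctx_clos R a a1 /\ ctx_clos R u u1.
Proof. inversion 1; subst; eauto 6. Qed.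

Lemma ctx_clos_shift_inv R b x :
  ctx_clos R (Shift b) x -> R (Shift b) x \/ exists b1, x = Shift b1 /\ ctx_clos R b b1.
Proof. inversion 1; subst; eauto. Qed.

Lemma ctx_clos_reset_inv R a x :
  ctx_clos R (Reset a) x -> R (Reset a) x \/ exists a1, x = Reset a1 /\ ctx_clos R a a1.
Proof. inversion 1; subst; eauto. Qed.

Section RelaxedEnv.

Variable E : rel.
Hypothesis E_relaxed : relaxed_env E.

Lemma relaxed_env_closed : closed_rel E.
Proof. intros a b H. now destruct (E_relaxed a b H) as (? & ? & _). Qed.

Lemma relaxed_env_irreducible a a' b : step a a' -> ~ E a b.
Proof.
  intros Hs H. destruct (E_relaxed a b H) as (_ & _ & [[Hv _] | [[_ Hst] _]]).
  - exact (value_irreducible a a' Hv Hs).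
  - exact (Hst a' Hs).
Qed.

Lemma relaxed_ctx_clos_value v x : ctx_clos E v x -> is_value v -> is_value x.
Proof.
  intros H [b ->]. apply ctx_clos_lam_inv in H as [H | (b1 & -> & _)].
  - destruct (E_relaxed _ _ H) as (_ & _ & [[_ Hv] | [[Hv _] _]]); auto.
    destruct Hv; eexists; eauto.
  - eexists; eauto.
Qed.

Lemma relaxed_ctx_clos_reset_inv a x :
  ctx_clos E (Reset a) x -> exists a1, x = Reset a1 /\ ctx_clos E a a1.
Proof.
  intros H. apply ctx_clos_reset_inv in H as [H|]; auto.
  destruct (E_relaxed _ _ H) as (Hc & _ & [[[b Hb] _] | [Hs _]]); try discriminate.
  destruct (reset_not_stuck a Hc Hs).
Qed.

(* A term of the form [F[t]] with [t] reducible is itself reducible, so it is never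
   a leaf of the closure: only [t] can be. *)
Lemma relaxed_ctx_clos_plug_inv F t t' x : step t t' -> ctx_clos E (plug F t) x ->
  exists F1 t1, x = plug F1 t1 /\ ectx_clos E F F1 /\ ctx_clos E t t1.
Proof.
  intros Hst; revert x; induction F as [|b F IH|F IH u|F IH]; intros x H.
  - exists Hole, x. repeat split; auto using ectx_hole.
  - pose proof (relaxed_env_irreducible _ _ x (step_plug (CAppR b F) _ _ Hst)) as Hn.
    apply ctx_clos_app_inv in H as [H | (l & y & -> & Hl & Hy)]; [contradiction|].
    destruct (IH y Hy) as (F1 & t1 & -> & HF & Ht).
    assert (Hv : is_value l) by (apply (relaxed_ctx_clos_value (Lam b)); eauto; eexists; eauto).
    destruct Hv as [b1 ->].
    exists (CAppR b1 F1), t1. repeat split; auto using ectx_appR.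
  - pose proof (relaxed_env_irreducible _ _ x (step_plug (CAppL F u) _ _ Hst)) as Hn.
    apply ctx_clos_app_inv in H as [H | (y & u1 & -> & Hy & Hu)]; [contradiction|].
    destruct (IH y Hy) as (F1 & t1 & -> & HF & Ht).
    exists (CAppL F1 u1), t1. repeat split; auto using ectx_appL.
  - pose proof (relaxed_env_irreducible _ _ x (step_plug (CReset F) _ _ Hst)) as Hn.
    apply ctx_clos_reset_inv in H as [H | (y & -> & Hy)]; [contradiction|].
    destruct (IH y Hy) as (F1 & t1 & -> & HF & Ht).
    exists (CReset F1), t1. repeat split; auto using ectx_reset.
Qed.

(* Either the closure descends to the shift, or it stops at a stuck leaf [Eb[Shift b]]
   of [E] sitting inside [Ep = Ea[Eb]]. *)
Lemma relaxed_ctx_clos_shift_inv Ep b y : pure Ep -> ctx_clos E (plug Ep (Shift b)) y ->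
  (exists Ea Eb Ea1 z, Ep = ctx_comp Ea Eb /\ pure Ea /\ pure Eb /\
     ectx_clos E Ea Ea1 /\ pure Ea1 /\ y = plug Ea1 z /\ E (plug Eb (Shift b)) z) \/
  (exists Ep1 b1, y = plug Ep1 (Shift b1) /\ ectx_clos E Ep Ep1 /\ pure Ep1 /\
     ctx_clos E b b1).
Proof.
  revert y; induction Ep as [|c Ep IH|Ep IH u|Ep IH]; intros y HP H; simpl in *.
  - apply ctx_clos_shift_inv in H as [H | (b1 & -> & Hb)].
    + left. exists Hole, Hole, Hole, y. repeat split; auto using ectx_hole.
    + right. exists Hole, b1. repeat split; auto using ectx_hole.
  - apply ctx_clos_app_inv in H as [H | (l & y' & -> & Hl & Hy)].
    + left. exists Hole, (CAppR c Ep), Hole, y. repeat split; auto using ectx_hole.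
    + assert (Hv : is_value l) by (apply (relaxed_ctx_clos_value (Lam c)); eauto; eexists; eauto).
      destruct Hv as [c1 ->].
      destruct (IH y' HP Hy) as [(Ea & Eb & Ea1 & z & -> & ? & ? & ? & ? & -> & ?) |
                                 (Ep1 & b1 & -> & ? & ? & ?)].
      * left. exists (CAppR c Ea), Eb, (CAppR c1 Ea1), z. repeat split; auto using ectx_appR.
      * right. exists (CAppR c1 Ep1), b1. repeat split; auto using ectx_appR.
  - apply ctx_clos_app_inv in H as [H | (y' & u1 & -> & Hy & Hu)].
    + left. exists Hole, (CAppL Ep u), Hole, y. repeat split; auto using ectx_hole.
    + destruct (IH y' HP Hy) as [(Ea & Eb & Ea1 & z & -> & ? & ? & ? & ? & -> & ?) |
                                 (Ep1 & b1 & -> & ? & ? & ?)].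
      * left. exists (CAppL Ea u), Eb, (CAppL Ea1 u1), z. repeat split; auto using ectx_appL.
      * right. exists (CAppL Ep1 u1), b1. repeat split; auto using ectx_appL.
  - contradiction.
Qed.

End RelaxedEnv.

(** * Simulation *)

Section Simulation.

Variable X : envrel.
Hypothesis HX : relaxed_bisim X.

Lemma relaxed_bisim_envs E : envs X E -> relaxed_env E.
Proof. destruct HX as [[H _] _]. apply H. Qed.

Lemma relaxed_bisim_trip_step E t0 t1 t0' : trip X E t0 t1 -> step t0 t0' ->
  exists t1', steps t1 t1' /\ trip X E t0' t1'.
Proof. destruct HX as [_ [H _]]. intros Ht. apply (H _ _ _ Ht). Qed.

Lemma relaxed_bisim_trip_value E t0 t1 : trip X E t0 t1 -> is_value t0 ->
  exists v1, is_value v1 /\ steps t1 v1 /\ envs X (env_add E t0 v1).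
Proof. destruct HX as [_ [H _]]. intros Ht. apply (H _ _ _ Ht). Qed.

Lemma relaxed_bisim_trip_normal E t0 t1 : trip X E t0 t1 -> (forall u, ~ step t0 u) ->
  exists t1', steps t1 t1' /\ envs X (env_add E t0 t1').
Proof.
  intros Ht Hn. destruct (classic (is_value t0)) as [Hv | Hv].
  - destruct (relaxed_bisim_trip_value E t0 t1 Ht Hv) as (t1' & _ & ? & ?). eauto.
  - destruct HX as [_ [H _]]. destruct (H _ _ _ Ht) as (_ & _ & Hstuck & _).
    destruct (Hstuck (conj Hv Hn)) as (t1' & _ & ? & ?). eauto.
Qed.

Lemma relaxed_bisim_env_lam E b0 b1 v0 v1 : envs X E -> E (Lam b0) (Lam b1) ->
  is_value v0 -> is_value v1 -> tilde E v0 v1 -> trip X E (inst b0 v0) (inst b1 v1).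
Proof. destruct HX as [_ [_ H]]. intros HE. apply (proj1 (H E HE)). Qed.

Lemma relaxed_bisim_env_shift E E0 E1 s0 s1 E0' E1' : envs X E -> pure E0 -> pure E1 ->
  E (plug E0 (Shift s0)) (plug E1 (Shift s1)) ->
  pure E0' -> pure E1' -> hat E E0' E1' ->
  trip X E (Reset (inst s0 (cont2 E0' E0))) (Reset (inst s1 (cont2 E1' E1))).
Proof. destruct HX as [_ [_ H]]. intros HE; intros. eapply (proj2 (H E HE)); eauto. Qed.

Inductive core (E : rel) : term -> term -> Prop :=
| core_trip G0 G1 t0 t1 :
    ectx_clos E G0 G1 -> trip X E t0 t1 -> core E (plug G0 t0) (plug G1 t1)
| core_env a0 a1 : envs X E -> ctx_clos E a0 a1 -> core E a0 a1.

Lemma core_plug E G0 G1 a0 a1 :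
  ectx_clos E G0 G1 -> core E a0 a1 -> core E (plug G0 a0) (plug G1 a1).
Proof.
  intros HG [F0 F1 t0 t1 HF Ht | a0' a1' HE Ha].
  - rewrite <- !plug_comp. apply core_trip; auto using ectx_clos_comp.
  - apply core_env; auto using ctx_clos_plug.
Qed.

Lemma core_inst E b0 b1 v0 v1 : envs X E -> tilde E (Lam b0) (Lam b1) ->
  is_value v0 -> is_value v1 -> tilde E v0 v1 -> core E (inst b0 v0) (inst b1 v1).
Proof.
  intros HE (Hb & _ & _) Hv0 Hv1 Hv.
  apply ctx_clos_lam_inv in Hb as [Hb | (b1' & Heq & Hb)].
  - apply (core_trip E Hole Hole); [constructor|].
    now apply relaxed_bisim_env_lam.
  - injection Heq as <-. destruct Hv as (Hv & _).
    apply core_env; auto.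
    apply ctx_clos_inst; auto using relaxed_env_closed, relaxed_bisim_envs.
Qed.

Lemma core_value E v0 a1 : core E v0 a1 -> is_value v0 ->
  exists E2 v1, rel_incl E E2 /\ envs X E2 /\ is_value v1 /\ steps a1 v1 /\
    ctx_clos E2 v0 v1.
Proof.
  intros [G0 G1 t0 t1 HG Ht | a0 a1' HE Ha] [b Hb].
  - apply plug_eq_lam in Hb as [-> ->]. inversion HG; subst; simpl.
    destruct (relaxed_bisim_trip_value E _ _ Ht) as (v1 & Hv1 & Hs & HE2); [eexists; eauto|].
    exists (env_add E (Lam b) v1), v1.
    repeat split; auto using cc_rel.
    + intros x y; now left.
    + apply cc_rel. now right.
  - subst. exists E, a1'. repeat split; auto using steps_refl.
    + now intros x y.
    + apply (relaxed_ctx_clos_value E (relaxed_bisim_envs E HE) (Lam b)); auto.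
      eexists; eauto.
Qed.

Section EnvClosure.

Variable E : rel.
Hypothesis HE : envs X E.

Let E_relaxed : relaxed_env E := relaxed_bisim_envs E HE.
Let E_closed : closed_rel E := relaxed_env_closed E E_relaxed.

Lemma env_clos_sim_beta b v r1 : is_value v -> ctx_clos E (App (Lam b) v) r1 ->
  closed (App (Lam b) v) -> closed r1 ->
  exists r1', contr r1 r1' /\ core E (inst b v) r1'.
Proof.
  intros Hv H Hc0 Hc1.
  pose proof (step_plug_contr Hole _ _ (contr_beta b v Hv)) as Hst.
  apply ctx_clos_app_inv in H as [H | (l & y & -> & Hl & Hy)].
  { destruct (relaxed_env_irreducible E E_relaxed _ _ _ Hst H). }
  assert (Hl' : is_value l) by (apply (relaxed_ctx_clos_value E E_relaxed (Lam b)); eauto; eexists; eauto).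
  destruct Hl' as [b1 ->].
  assert (Hy' : is_value y) by (apply (relaxed_ctx_clos_value E E_relaxed v); auto).
  destruct Hc0 as [Hcb Hcv], Hc1 as [Hcb1 Hcy].
  exists (inst b1 y). split; [now constructor|].
  apply core_inst; repeat split; auto.
Qed.

Lemma env_clos_sim_reset v r1 : is_value v -> ctx_clos E (Reset v) r1 ->
  exists r1', contr r1 r1' /\ core E v r1'.
Proof.
  intros Hv H. apply (relaxed_ctx_clos_reset_inv E E_relaxed) in H as (y & -> & Hy).
  exists y. split; [constructor|apply core_env; auto].
  exact (relaxed_ctx_clos_value E E_relaxed v y Hy Hv).
Qed.

(* When the closure meets a stuck leaf [E (Eb[Shift b]) z], clause (2b) of relaxed
   bisimulations relates the captured continuations. *)
Lemma env_clos_sim_shift Ep b r1 : pure Ep -> ctx_clos E (Reset (plug Ep (Shift b))) r1 ->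
  closed (Reset (plug Ep (Shift b))) -> closed r1 ->
  exists r1', contr r1 r1' /\ core E (Reset (inst b (cont Ep))) r1'.
Proof.
  intros HEp H Hc0 Hc1.
  apply (relaxed_ctx_clos_reset_inv E E_relaxed) in H as (y & -> & Hy).
  destruct (relaxed_ctx_clos_shift_inv E E_relaxed Ep b y HEp Hy) as
    [(Ea & Eb & Ea1 & z & -> & HEa & HEb & HEa1 & HpEa1 & -> & Hz) |
     (Ep1 & b1 & -> & HEp1 & HpEp1 & Hb)].
  - destruct (E_relaxed _ _ Hz) as (_ & Hcz & [[Hv _] | [_ Hsz]]).
    { destruct (plug_shift_not_value Eb b Hv). }
    destruct (closed_stuck_inv z Hcz Hsz) as (Ez & c & HEz & ->).
    unfold closed in Hc0, Hc1; simpl in Hc0, Hc1.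
    apply closed_at_plug in Hc0 as [Hc0 _], Hc1 as [Hc1 _].
    apply ctx_closed_at_comp in Hc0 as [HcEa _].
    exists (Reset (inst c (cont (ctx_comp Ea1 Ez)))). split.
    + rewrite <- plug_comp. constructor. now apply pure_comp.
    + rewrite !cont_comp. apply (core_trip E Hole Hole); [constructor|].
      apply relaxed_bisim_env_shift; auto using hat_of_ectx_clos.
  - exists (Reset (inst b1 (cont Ep1))). split; [now constructor|].
    apply core_env; auto.
    apply cc_reset, ctx_clos_inst, ctx_clos_cont; auto.
Qed.

Lemma env_clos_sim_step a0 a1 a0' : ctx_clos E a0 a1 -> closed a0 -> closed a1 ->
  step a0 a0' -> exists a1', step a1 a1' /\ core E a0' a1'.
Proof.
  intros H Hc0 Hc1 Hst.
  destruct (step_contr_inv _ _ Hst) as (F & r0 & r0' & Hr & -> & ->).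
  destruct (relaxed_ctx_clos_plug_inv E E_relaxed F r0 r0' a1
              (step_plug_contr Hole _ _ Hr) H) as (F1 & r1 & -> & HF & H').
  unfold closed in Hc0, Hc1. apply closed_at_plug in Hc0 as [_ Hc0], Hc1 as [_ Hc1].
  assert (Hsim : exists r1', contr r1 r1' /\ core E r0' r1').
  { destruct Hr as [b v Hv | Ep b HEp | v Hv].
    - now apply env_clos_sim_beta.
    - now apply env_clos_sim_shift.
    - now apply env_clos_sim_reset. }
  destruct Hsim as (r1' & Hr1 & Hcore).
  exists (plug F1 r1'). split; [now apply step_plug_contr|].
  now apply core_plug.
Qed.

End EnvClosure.

Lemma core_sim_step E a0 a1 a0' : core E a0 a1 -> closed a0 -> closed a1 -> step a0 a0' ->
  exists E2 a1', rel_incl E E2 /\ steps a1 a1' /\ core E2 a0' a1'.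
Proof.
  intros [G0 G1 t0 t1 HG Ht | a0'' a1'' HE Ha] Hc0 Hc1 Hst.
  2:{ destruct (env_clos_sim_step E HE _ _ _ Ha Hc0 Hc1 Hst) as (a1' & ? & ?).
      exists E, a1'. repeat split; auto using step_steps. now intros x y. }
  destruct (classic (exists u, step t0 u)) as [(u & Hu) | Hn].
  - rewrite (step_det _ _ _ Hst (step_plug G0 _ _ Hu)).
    destruct (relaxed_bisim_trip_step E t0 t1 u Ht Hu) as (t1' & Hs & Ht').
    exists E, (plug G1 t1'). repeat split; auto using steps_plug.
    + now intros x y.
    + now apply core_trip.
  - (* [t0] is a value or stuck: [X] adds the pair of normal forms to the environment *)
    destruct (relaxed_bisim_trip_normal E t0 t1 Ht (fun u Hu => Hn (ex_intro _ u Hu)))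
      as (t1' & Hs & HE2).
    set (E2 := env_add E t0 t1').
    assert (Hi : rel_incl E E2) by (intros x y; now left).
    assert (Hcc : ctx_clos E2 (plug G0 t0) (plug G1 t1')).
    { apply ctx_clos_plug; [now apply (ectx_clos_incl E) | apply cc_rel; now right]. }
    assert (Hs' : steps (plug G1 t1) (plug G1 t1')) by now apply steps_plug.
    destruct (env_clos_sim_step E2 HE2 _ _ _ Hcc Hc0 (closed_steps _ _ Hs' Hc1) Hst)
      as (a1' & ? & ?).
    exists E2, a1'. repeat split; auto.
    eapply steps_trans; [exact Hs'|]. now apply step_steps.
Qed.

End Simulation.

(** * Symmetry *)

Definition envrel_flip (X : envrel) : envrel :=
  {| envs := fun E => envs X (rel_flip E);
     trip := fun E a b => trip X (rel_flip E) b a |}.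

Lemma relaxed_env_flip E : relaxed_env E -> relaxed_env (rel_flip E).
Proof. intros H a b Hab. destruct (H b a Hab) as (? & ? & ?). unfold rel_flip; tauto. Qed.

Lemma relaxed_bisim_flip X : relaxed_bisim X -> relaxed_bisim (envrel_flip X).
Proof.
  intros [[Henv Htrip] [H1 H2]]. split; [split|split]; simpl.
  - intros E HE. exact (relaxed_env_flip _ (Henv _ HE)).
  - intros E t0 t1 H. destruct (Htrip _ _ _ H) as (HE & ? & ?).
    split; [exact (relaxed_env_flip _ HE) | auto].
  - intros E t0 t1 H. destruct (H1 _ _ _ H) as (Ha & Hb & Hc & Hd1 & Hd2 & Hd3).
    repeat split; auto; intros Hv;
      [destruct (Hd2 Hv) as (v & ? & ? & ?) | destruct (Hd3 Hv) as (v & ? & ? & ?) |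
       destruct (Hb Hv) as (v & ? & ? & ?) | destruct (Hc Hv) as (v & ? & ? & ?)];
      exists v; rewrite rel_flip_env_add; auto.
  - intros E HE. destruct (H2 _ HE) as [Ha Hb]. split.
    + intros b0 b1 v0 v1 Hl Hv0 Hv1 Ht. apply Ha; auto using tilde_flip.
    + intros E0 E1 s0 s1 HE0 HE1 Hp E0' E1' HE0' HE1' Hh. apply Hb; auto using hat_flip.
Qed.

Definition envrel_mirrors (X X' : envrel) : Prop :=
  (forall E, envs X E -> envs X' (rel_flip E)) /\
  (forall E t0 t1, trip X E t0 t1 -> trip X' (rel_flip E) t1 t0).

Lemma envrel_mirrors_flip X : envrel_mirrors X (envrel_flip X).
Proof. split; simpl; auto. Qed.

Lemma envrel_flip_mirrors X : envrel_mirrors (envrel_flip X) X.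
Proof. split; simpl; auto. Qed.

Lemma core_mirror X X' E a0 a1 : envrel_mirrors X X' ->
  core X E a0 a1 -> core X' (rel_flip E) a1 a0.
Proof.
  intros [Henv Htrip] [G0 G1 t0 t1 HG Ht | a0' a1' HE Ha].
  - apply core_trip; auto using ectx_clos_flip.
  - apply core_env; auto using ctx_clos_flip.
Qed.

(** * From relaxed to program bisimulations *)

Definition tilde_values (E' E : rel) : Prop :=
  forall a b, E' a b -> tilde E a b /\ is_value a /\ is_value b.

Definition weak_core (X : envrel) (E : rel) (s0 s1 : term) : Prop :=
  exists a0 a1, steps s0 a0 /\ steps s1 a1 /\ core X E a0 a1.

Definition prog_of (X : envrel) : envrel :=
  {| envs := fun E' => exists E, envs X E /\ tilde_values E' E;
     trip := fun E' s0 s1 => exists E, tilde_values E' E /\ closed s0 /\ closed s1 /\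
                                     weak_core X E s0 s1 |}.

Lemma tilde_values_incl E' E E2 : rel_incl E E2 -> tilde_values E' E -> tilde_values E' E2.
Proof.
  intros Hi Hu a b Hab. destruct (Hu a b Hab) as [Ht ?]. split; auto.
  eapply tilde_mono; [|exact Ht]. auto using cc_rel.
Qed.

Lemma tilde_values_flip E' E : tilde_values E' E -> tilde_values (rel_flip E') (rel_flip E).
Proof. intros Hu a b Hab. destruct (Hu b a Hab) as (? & ? & ?). auto using tilde_flip. Qed.

Lemma tilde_values_prog_env E' E : tilde_values E' E -> prog_env E'.
Proof. intros Hu a b H. now destruct (Hu a b H) as [(_ & ? & ?) [? ?]]. Qed.

Lemma tilde_values_clos E' E a b : tilde_values E' E -> E' a b -> ctx_clos E a b.
Proof. intros Hu H. now destruct (Hu a b H) as [(? & _) _]. Qed.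

Lemma prog_of_trip_core X E' E s0 s1 : tilde_values E' E -> closed s0 -> closed s1 ->
  core X E s0 s1 -> trip (prog_of X) E' s0 s1.
Proof.
  intros Hu Hc0 Hc1 Hc. exists E. do 3 (split; [assumption|]).
  exists s0, s1. auto using steps_refl.
Qed.

Lemma prog_of_mirror X X' : envrel_mirrors X X' -> envrel_mirrors (prog_of X) (prog_of X').
Proof.
  intros HX. split; simpl.
  - intros E' (E & HE & Hu). exists (rel_flip E). split; [apply HX; auto|].
    now apply tilde_values_flip.
  - intros E' s0 s1 (E & Hu & Hc0 & Hc1 & a0 & a1 & Hs0 & Hs1 & Hc).
    exists (rel_flip E). split; [now apply tilde_values_flip|].
    do 2 (split; [assumption|]). exists a1, a0. repeat split; auto.
    now apply (core_mirror X).
Qed.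

Section ProgOf.

Variable X : envrel.
Hypothesis HX : relaxed_bisim X.

Lemma weak_core_step E s0 s1 s0' : weak_core X E s0 s1 -> closed s0 -> closed s1 ->
  step s0 s0' -> exists E2, rel_incl E E2 /\ weak_core X E2 s0' s1.
Proof.
  intros (a0 & a1 & Hs0 & Hs1 & Hc) Hc0 Hc1 Hst.
  destruct (steps_step_det _ _ _ Hs0 Hst) as [<- | Hs0'].
  - destruct (core_sim_step X HX E s0 a1 s0' Hc Hc0 (closed_steps _ _ Hs1 Hc1) Hst)
      as (E2 & a1' & Hi & Hs & Hc').
    exists E2. split; auto. exists s0', a1'. repeat split; auto using steps_refl.
    eapply steps_trans; eauto.
  - exists E. split; [now intros x y|]. exists a0, a1. auto.
Qed.

Lemma weak_core_value E v0 s1 : weak_core X E v0 s1 -> is_value v0 ->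
  exists E2 v1, rel_incl E E2 /\ envs X E2 /\ is_value v1 /\ steps s1 v1 /\
    ctx_clos E2 v0 v1.
Proof.
  intros (a0 & a1 & Hs0 & Hs1 & Hc) Hv.
  rewrite (steps_value _ _ Hv Hs0) in Hc.
  destruct (core_value X HX E v0 a1 Hc Hv) as (E2 & v1 & ? & ? & ? & ? & ?).
  exists E2, v1. repeat split; auto. eapply steps_trans; eauto.
Qed.

Lemma prog_of_step_left E' p0 p1 p0' :
  trip (prog_of X) E' p0 p1 -> step p0 p0' -> trip (prog_of X) E' p0' p1.
Proof.
  intros (E & Hu & Hc0 & Hc1 & Hw) Hst.
  destruct (weak_core_step E p0 p1 p0' Hw Hc0 Hc1 Hst) as (E2 & Hi & Hw').
  exists E2. split; [now apply (tilde_values_incl E' E)|].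
  split; [now apply (closed_step p0)|]. auto.
Qed.

Lemma prog_of_value_left E' p0 p1 v0 : trip (prog_of X) E' p0 p1 -> is_value v0 ->
  step p0 v0 -> exists v1, is_value v1 /\ steps p1 v1 /\ envs (prog_of X) (env_add E' v0 v1).
Proof.
  intros Ht Hv Hst.
  destruct (prog_of_step_left E' p0 p1 v0 Ht Hst) as (E & Hu & Hc0 & Hc1 & Hw).
  destruct (weak_core_value E v0 p1 Hw Hv) as (E2 & v1 & Hi & HE2 & Hv1 & Hs & Hcc).
  exists v1. repeat split; auto. exists E2. split; auto.
  intros a b [Hab | [-> ->]].
  - now apply (tilde_values_incl E' E).
  - repeat split; eauto using closed_steps.
Qed.

End ProgOf.

Lemma prog_of_plug X E' t0 t1 E0 E1 : trip (prog_of X) E' t0 t1 -> hat E' E0 E1 ->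
  trip (prog_of X) E' (Reset (plug E0 t0)) (Reset (plug E1 t1)).
Proof.
  intros (E & Hu & Hc0 & Hc1 & a0 & a1 & Hs0 & Hs1 & Hc) Hh.
  assert (HhE : hat E E0 E1) by (apply (hat_mono E'); eauto using tilde_values_clos).
  destruct (hat_ctx_closed _ _ _ HhE) as [HC0 HC1].
  exists E. split; [exact Hu|].
  unfold closed; simpl; rewrite !closed_at_plug. do 2 (split; [auto|]).
  exists (Reset (plug E0 a0)), (Reset (plug E1 a1)).
  repeat split; [exact (steps_plug (CReset E0) _ _ Hs0) |
                 exact (steps_plug (CReset E1) _ _ Hs1) |].
  apply (core_plug X E (CReset E0) (CReset E1)); auto.
  constructor. now apply ectx_clos_of_hat.
Qed.

Lemma prog_of_env_lam X E' b0 b1 v0 v1 : relaxed_bisim X -> envs (prog_of X) E' ->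
  E' (Lam b0) (Lam b1) -> is_value v0 -> is_value v1 -> tilde E' v0 v1 ->
  trip (prog_of X) E' (inst b0 v0) (inst b1 v1).
Proof.
  intros HX (E & HE & Hu) Hl Hv0 Hv1 Ht.
  destruct (Hu _ _ Hl) as [Hlam _].
  assert (HtE : tilde E v0 v1) by (apply (tilde_mono E'); eauto using tilde_values_clos).
  apply (prog_of_trip_core X E' E); [auto | | | now apply core_inst].
  - destruct Hlam as (_ & Hb0 & _), HtE as (_ & Hc & _). now apply closed_inst.
  - destruct Hlam as (_ & _ & Hb1), HtE as (_ & _ & Hc). now apply closed_inst.
Qed.

Lemma prog_of_step_right X E' p0 p1 p1' : relaxed_bisim X ->
  trip (prog_of X) E' p0 p1 -> step p1 p1' -> trip (prog_of X) E' p0 p1'.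
Proof.
  intros HX Ht Hs.
  apply (prog_of_mirror _ _ (envrel_mirrors_flip X)) in Ht.
  apply (prog_of_step_left _ (relaxed_bisim_flip X HX) _ _ _ _ Ht) in Hs.
  exact (proj2 (prog_of_mirror _ _ (envrel_flip_mirrors X)) _ _ _ Hs).
Qed.

Lemma prog_of_value_right X E' p0 p1 v1 : relaxed_bisim X ->
  trip (prog_of X) E' p0 p1 -> is_value v1 -> step p1 v1 ->
  exists v0, is_value v0 /\ steps p0 v0 /\ envs (prog_of X) (env_add E' v0 v1).
Proof.
  intros HX Ht Hv Hs.
  apply (prog_of_mirror _ _ (envrel_mirrors_flip X)) in Ht.
  destruct (prog_of_value_left _ (relaxed_bisim_flip X HX) _ _ _ _ Ht Hv Hs)
    as (v0 & Hv0 & Hs0 & Henv).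
  exists v0. repeat split; auto.
  apply (prog_of_mirror _ _ (envrel_flip_mirrors X)) in Henv.
  now rewrite rel_flip_env_add in Henv.
Qed.

Lemma prog_of_bisim X : relaxed_bisim X -> prog_bisim (prog_of X).
Proof.
  intros HX. split; [split|split; [|split]].
  - intros E' (E & _ & Hu). eapply tilde_values_prog_env; eauto.
  - intros E' t0 t1 (E & Hu & ? & ? & _). split; auto. eapply tilde_values_prog_env; eauto.
  - intros E' t0 t1 Ht _ E0 E1 _ _ Hh. now apply prog_of_plug.
  - intros E' p0 p1 Hp0 Hp1 Ht. repeat split.
    + intros p0' _ Hs. exists p1. refine (conj Hp1 (conj (steps_refl _) _)).
      now apply (prog_of_step_left X HX E' p0).
    + intros v0 Hv Hs. now apply (prog_of_value_left X HX E' p0).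
    + intros p1' _ Hs. exists p0. refine (conj Hp0 (conj (steps_refl _) _)).
      now apply (prog_of_step_right X E' p0 p1).
    + intros v1 Hv Hs. now apply (prog_of_value_right X E' p0 p1).
  - intros E' HE b0 b1 v0 v1. now apply prog_of_env_lam.
Qed.

Theorem lemma12 (t0 t1 : term) :
  closed t0 -> closed t1 ->
  relaxed_bisimilar empty_env t0 t1 -> program_bisimilar empty_env t0 t1.
Proof.
  intros Hc0 Hc1 (X & HX & Ht).
  exists (prog_of X). split; [now apply prog_of_bisim|].
  apply (prog_of_trip_core X empty_env empty_env); auto; [intros a b [] |].
  apply (core_trip X empty_env Hole Hole); [constructor | exact Ht].
Qed.
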